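(* Let $n\ge2$ be even and let $\mathcal{D}_{S_1},\mathcal{D}_{S_2}\subseteq\mathcal{D}_{[n]}\setminus\{n\}$. If $\mathrm{Spec}(\mathrm{ICG}(n,\mathcal{D}_{S_1}))=\mathrm{Spec}(\mathrm{ICG}(n,\mathcal{D}_{S_2}))$, then $n/2\notin\mathcal{D}_{S_1}\triangle\mathcal{D}_{S_2}$ (symmetric difference).
   Context: Identify $\mathbb{Z}_n$ with $[n]=\{1,\dots,n\}$. For a divisor $d$ of $n$, $G_n(d)=\{j\in[n]:\gcd(j,n)=d\}$; $\mathcal{D}_{[n]}$ is the set of positive divisors of $n$. For $\mathcal{D}\subseteq\mathcal{D}_{[n]}\setminus\{n\}$, $\mathrm{ICG}(n,\mathcal{D})=\mathrm{Cay}(\mathbb{Z}_n,S)$ with $S=\bigcup_{d\in\mathcal{D}}G_n(d)$, and $\mathcal{D}=\mathcal{D}_S$. $\mathrm{Spec}$ is the multiset of adjacency eigenvalues. *)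

From mathcomp Require Import all_boot all_order all_algebra all_field.
Set Implicit Arguments. Unset Strict Implicit. Unset Printing Implicit Defensive.
Import GRing.Theory Num.Theory.
Local Open Scope ring_scope.

(* Z_n is represented by 'I_n = {0,...,n-1}; the residue 0 stands for n in [n],
   and gcdn 0 n = n = gcdn n n, so the gcd-classes G_n(d) are unchanged. *)

Definition icg_conn (n : nat) (D : seq nat) (k : nat) : bool :=
  gcdn k n \in D.

Definition icg_adj (n : nat) (D : seq nat) : 'M[algC]_n :=
  \matrix_(i < n, j < n)
    (if icg_conn n D ((j + (n - i)) %% n)%N then 1 else 0).

Definition spec_mult (n : nat) (A : 'M[algC]_n) (lambda : algC) : nat :=
  mup lambda (char_poly A).

Definition same_spec (n : nat) (A B : 'M[algC]_n) : Prop :=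
  forall lambda : algC, spec_mult A lambda = spec_mult B lambda.

(* D is a set of divisors of n other than n (positive divisors, since 0 does not divide n >= 1). *)
Definition proper_divisor_set (n : nat) (D : seq nat) : bool :=
  all (fun d => (d %| n)%N && (d != n)) D.

Definition in_symdiff (x : nat) (A B : seq nat) : bool :=
  (x \in A) (+) (x \in B).

From mathcomp Require Import all_boot all_order all_algebra all_field.
From mathcomp Require Import zify.
Set Implicit Arguments. Unset Strict Implicit. Unset Printing Implicit Defensive.
Import Order.TTheory GRing.Theory Num.Theory.

(* ICG(n, D) is |S|-regular, and for a regular graph with nonnegative adjacency
   matrix the degree is an eigenvalue that bounds the modulus of every other
   eigenvalue; hence cospectral ICGs have the same degree |S|.  Since
   gcd(n - k, n) = gcd(k, n), the connection set is closed under k |-> n - k,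
   whose only fixed points in Z_n are 0 and n/2; as 0 is never in S, |S| is odd
   exactly when n/2 is in S, i.e. when n/2 is in D. *)

Lemma gcdnBl x n : x <= n -> gcdn (n - x) n = gcdn x n.
Proof.
move=> le_xn; have def_n : n = (n - x) + x by lia.
by rewrite {2}def_n gcdnDl gcdnC {2}def_n gcdnDr.
Qed.

Lemma odd_sum_reflect (m : nat) (f : nat -> nat) :
  (forall k, k <= m.*2 -> f (m.*2 - k) = f k) ->
  odd (\sum_(k < m.*2) f k) = odd (f 0 + f m).
Proof.
move=> f_refl; case: (posnP m) => [-> | m_gt0]; first by rewrite big_ord0 addnn odd_double.
rewrite -(big_mkord xpredT) -addnn (big_cat_nat (n := m)) ?leq_addr //=.
rewrite -{2}(add0n m) big_addn addnK big_ltn // [in X in _ + X]big_ltn //= add0n.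
have -> : \sum_(1 <= i < m) f (i + m) = \sum_(1 <= i < m) f i.
  rewrite big_nat_rev /=; apply: eq_big_nat => i /andP [i_gt0 lt_im].
  by rewrite -f_refl; [congr f|]; lia.
by rewrite addnACA addnn oddD odd_double addbF.
Qed.

Section RegularNonnegativeMatrix.
Local Open Scope ring_scope.

Variables (n : nat) (A : 'M[algC]_n) (r : algC).
Hypothesis A_ge0 : forall i j, 0 <= A i j.
Hypothesis row_sum : forall i, \sum_j A i j = r.
Hypothesis col_sum : forall j, \sum_i A i j = r.

Lemma eigenvalue_col_sum : (0 < n)%N -> eigenvalue A r.
Proof.
move=> n_gt0; apply/eigenvalueP; exists (const_mx 1).
  apply/matrixP => i j; rewrite !mxE.
  under eq_bigr do rewrite mxE mul1r.
  by rewrite col_sum mulr1.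
apply/eqP => /matrixP /(_ 0 (Ordinal n_gt0)); rewrite !mxE => /eqP.
by rewrite oner_eq0.
Qed.

(* The l^1 norm of a left eigenvector grows by at most the row sum r. *)
Lemma norm_eigenvalue_le_row_sum a : eigenvalue A a -> `|a| <= r.
Proof.
move=> /eigenvalueP [v eig_v v_neq0].
set S := \sum_j `|v 0 j|.
have S_gt0 : 0 < S.
  have S_ge0 : 0 <= S by apply: sumr_ge0 => j _.
  rewrite lt_def S_ge0 andbT.
  apply: contra v_neq0 => /eqP S0; apply/eqP/matrixP => i j.
  rewrite ord1 !mxE; apply: normr0_eq0.
  exact: (psumr_eq0P (fun j _ => normr_ge0 (v 0 j)) S0).
have coord_le j : `|a| * `|v 0 j| <= \sum_i `|v 0 i| * A i j.
  have := congr1 (fun M : 'rV[algC]_n => M 0 j) eig_v; rewrite /= !mxE => eig_j.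
  rewrite -normrM -eig_j; apply: le_trans (ler_norm_sum _ _ _) _.
  by apply: ler_sum => i _; rewrite normrM (ger0_norm (A_ge0 _ _)).
rewrite -(ler_pM2r S_gt0) {2}/S mulr_sumr.
apply: le_trans (ler_sum _ (fun j _ => coord_le j)) _.
rewrite exchange_big /= mulr_sumr; apply: ler_sum => i _.
by rewrite -mulr_sumr row_sum mulrC.
Qed.

End RegularNonnegativeMatrix.

Lemma eigenvalue_same_spec n (A B : 'M[algC]_n) a :
  same_spec A B -> eigenvalue A a -> eigenvalue B a.
Proof.
move=> AB; rewrite !eigenvalue_root_char -!dvdp_XsubCl.
by rewrite !XsubC_dvd ?monic_neq0 ?char_poly_monic // -[mup _ _]/(spec_mult _ _) AB.
Qed.

Section ICG.
Variables (n : nat) (D : seq nat).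

Definition icg_deg : nat := \sum_(k < n) icg_conn n D k.

Lemma icg_connBl k : k <= n -> icg_conn n D (n - k) = icg_conn n D k.
Proof. by move=> le_kn; rewrite /icg_conn gcdnBl. Qed.

Lemma odd_icg_deg : ~~ odd n -> n \notin D -> odd icg_deg = (n %/ 2 \in D).
Proof.
move=> even_n nD; set m := n %/ 2.
have def_n : n = m.*2 by rewrite /m divn2 -{1}(odd_double_half n) (negbTE even_n).
have dvd_mn : m %| n by rewrite def_n -muln2 dvdn_mulr.
have := @odd_sum_reflect m (fun k => icg_conn n D k); rewrite -def_n /=.
rewrite /icg_deg => -> => [|k le_kn]; last by rewrite icg_connBl.
rewrite /icg_conn gcd0n (negbTE nD).
by rewrite (gcdn_idPl dvd_mn); case: (m \in D).
Qed.

Local Open Scope ring_scope.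

Lemma modn_subn i j : (i < n)%N -> (j < n)%N ->
  ((j + (n - i)) %% n = if i <= j then j - i else j + n - i)%N.
Proof.
move=> lt_in lt_jn; case: ifP => le_ij; last by rewrite modn_small; lia.
have -> : (j + (n - i) = (j - i) + n)%N by lia.
by rewrite modnDr modn_small //; lia.
Qed.

Lemma icg_adjE (i j : 'I_n) : icg_adj n D i j = (icg_conn n D ((j + (n - i)) %% n))%:R.
Proof. by rewrite mxE; case: icg_conn. Qed.

Lemma icg_adj_ge0 (i j : 'I_n) : 0 <= icg_adj n D i j.
Proof. by rewrite icg_adjE ler0n. Qed.

Lemma icg_adjC (i j : 'I_n) : icg_adj n D i j = icg_adj n D j i.
Proof.
rewrite !icg_adjE !modn_subn //; congr (_ %:R).
have lt_in := ltn_ord i; have lt_jn := ltn_ord j.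
case: (ltngtP i j) => [lt_ij | lt_ji | /val_inj -> //].
- by rewrite -icg_connBl; [congr icg_conn|]; lia.
- by rewrite -[in RHS]icg_connBl; [congr icg_conn|]; lia.
Qed.

(* Column j is a permutation of the connection sequence, via i |-> j - i mod n. *)
Lemma icg_col_sum (j : 'I_n) : \sum_i icg_adj n D i j = icg_deg%:R.
Proof.
have n_gt0 : (0 < n)%N by apply: leq_ltn_trans (ltn_ord j).
pose diff (i : 'I_n) : 'I_n := Ordinal (ltn_pmod (j + (n - i)) n_gt0).
have diff_inj : injective diff.
  move=> i1 i2 /(congr1 val) /=; rewrite !modn_subn // => eq_diff.
  apply/val_inj; move: eq_diff (ltn_ord i1) (ltn_ord i2) (ltn_ord j) => /=.
  by case: (leqP i1 j); case: (leqP i2 j); lia.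
rewrite /icg_deg natr_sum [in RHS](reindex_inj diff_inj).
by apply: eq_bigr => i _; rewrite icg_adjE.
Qed.

Lemma icg_row_sum (i : 'I_n) : \sum_j icg_adj n D i j = icg_deg%:R.
Proof. by rewrite -(icg_col_sum i); apply: eq_bigr => j _; rewrite icg_adjC. Qed.

End ICG.

Lemma icg_deg_le_of_same_spec n D1 D2 : (0 < n)%N ->
  same_spec (icg_adj n D1) (icg_adj n D2) -> icg_deg n D1 <= icg_deg n D2.
Proof.
move=> n_gt0 cospec; rewrite -(ler_nat algC) -[X in (X <= _)%R]normr_nat.
apply: (norm_eigenvalue_le_row_sum (@icg_adj_ge0 n D2) (@icg_row_sum n D2)).
exact: eigenvalue_same_spec cospec (eigenvalue_col_sum (@icg_col_sum n D1) n_gt0).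
Qed.

Theorem lemma3p8 (n : nat) (D1 D2 : seq nat) :
  (2 <= n)%N -> ~~ odd n ->
  proper_divisor_set n D1 -> proper_divisor_set n D2 ->
  same_spec (icg_adj n D1) (icg_adj n D2) ->
  ~~ in_symdiff (n %/ 2) D1 D2.
Proof.
move=> n_ge2 even_n D1_proper D2_proper cospec.
have n_gt0 : (0 < n)%N by apply: ltnW.
have notin_proper D : proper_divisor_set n D -> n \notin D.
  by move=> /allP D_proper; apply/negP => /D_proper; rewrite eqxx andbF.
have cospec' : same_spec (icg_adj n D2) (icg_adj n D1) by move=> a; rewrite cospec.
have deg_eq : icg_deg n D1 = icg_deg n D2.
  by apply/eqP; rewrite eqn_leq !icg_deg_le_of_same_spec.
rewrite /in_symdiff -(odd_icg_deg even_n (notin_proper _ D1_proper)).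
by rewrite -(odd_icg_deg even_n (notin_proper _ D2_proper)) deg_eq addbb.
Qed.
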